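(* Let $(X,\|\cdot\|)$ be a normed space and $X_1\subset X_2\subset\cdots$ an increasing sequence of linear subspaces with $\bigcup_n X_n$ dense in $X$. Suppose each $X_n$ carries a norm $\|\cdot\|_n$ and $\rho_n\in R(S_{(X_n,\|\cdot\|_n)})$. Assume $\lim_{n\to\infty}\sup_{x\in X_n\cap S_X}|1-\|x\|_n|=0$. Then every accumulation point $\rho$ of $(\rho_n)$ belongs to $R(S_X)$.
   Context: For a normed space $(Z,\|\cdot\|_Z)$ with unit sphere $S_Z$, $R(S_Z):=\bigcap_{m\in\mathbb{N}}\bigcap_{w_1,\dots,w_m\in S_Z}\overline{\mathrm{conv}}\{\frac1m\sum_{j=1}^m\|x-w_j\|_Z:x\in S_Z\}$ (closed convex hulls in $\mathbb{R}$); $S_X$ is the unit sphere of $(X,\|\cdot\|)$ and $S_{(X_n,\|\cdot\|_n)}$ the unit sphere of $X_n$ for $\|\cdot\|_n$. *)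

From HB Require Import structures.
From mathcomp Require Import all_boot all_order all_algebra.
From mathcomp Require Import all_classical all_reals all_analysis.
Set Implicit Arguments. Unset Strict Implicit. Unset Printing Implicit Defensive.
Import Order.TTheory GRing.Theory Num.Theory.
Import numFieldNormedType.Exports.
Local Open Scope classical_set_scope.
Local Open Scope ring_scope.

Definition convex_set_R (R : realType) (C : set R) : Prop :=
  forall a b t : R, C a -> C b -> 0 <= t -> t <= 1 -> C (t * a + (1 - t) * b).

Definition closed_conv_hull (R : realType) (A : set R) : set R :=
  \bigcap_(C in [set C : set R | convex_set_R C /\ closed C /\ A `<=` C]) C.

(* R(S) for a sphere S of a normed space with distance d(x,w) = ||x - w||:
   intersection over m >= 1 (written m.+1) and w_1..w_m in S of the closed
   convex hull of { (1/m) sum_j d(x, w_j) : x in S }. *)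
Definition rendezvous_set (R : realType) (T : Type) (S : set T)
    (d : T -> T -> R) : set R :=
  \bigcap_(m in [set: nat])
    \bigcap_(w in [set w : 'I_m.+1 -> T | forall j, S (w j)])
      closed_conv_hull
        [set (m.+1%:R)^-1 * \sum_(j < m.+1) d x (w j) | x in S].

Definition lin_subspace (R : realType) (X : normedModType R) (V : set X) : Prop :=
  V 0 /\ (forall x y, V x -> V y -> V (x + y)) /\
  (forall (a : R) x, V x -> V (a *: x)).

Definition norm_on (R : realType) (X : normedModType R) (V : set X)
    (N : X -> R) : Prop :=
  (forall x, V x -> 0 <= N x) /\
  (forall x, V x -> N x = 0 -> x = 0) /\
  (forall (a : R) x, V x -> N (a *: x) = `|a| * N x) /\
  (forall x y, V x -> V y -> N (x + y) <= N x + N y).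

Definition sphere_on (R : realType) (X : normedModType R) (V : set X)
    (N : X -> R) : set X := [set x | V x /\ N x = 1].

Definition R_sub (R : realType) (X : normedModType R) (V : set X)
    (N : X -> R) : set R :=
  rendezvous_set (sphere_on V N) (fun x w => N (x - w)).

Definition R_X (R : realType) (X : normedModType R) : set R :=
  rendezvous_set [set x : X | `|x| = 1] (fun x w => `|x - w|).

(* Fix w_1, ..., w_m on S_X and let f(x) be the mean of the ||x - w_j||.  By
   density and the uniform closeness of ||.||_n to ||.|| on X_n, for large n
   the w_j have close neighbours v_j on S_{X_n}, and every mean of the
   ||y - v_j||_n over y in S_{X_n} is close to the value of f at y/||y||.
   Since rho_n lies in the closed convex hull of these means, the accumulation
   point r lies below every upper bound and above every lower bound of f(S_X),
   which on the real line means that r is in the closed convex hull of f(S_X). *)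

From HB Require Import structures.
From mathcomp Require Import all_boot all_order all_algebra.
From mathcomp Require Import all_classical all_reals all_analysis.
From mathcomp Require Import ring lra.
Import Order.TTheory GRing.Theory Num.Theory.
Import numFieldNormedType.Exports.
Local Open Scope classical_set_scope.
Local Open Scope ring_scope.
Set Implicit Arguments. Unset Strict Implicit. Unset Printing Implicit Defensive.

Section RealHulls.
Variable R : realType.
Implicit Types (A B C : set R) (r s t : R).

Lemma convex_set_R_between C a b r :
  convex_set_R C -> C a -> C b -> a <= r <= b -> C r.
Proof.
move=> Cconv Ca Cb /andP[ar rb].
have [eq_ab|neq_ab] := eqVneq a b.
  by move: rb; rewrite -eq_ab => ra; have -> : r = a by apply/le_anti/andP.
have ba_gt0 : 0 < b - a by rewrite subr_gt0 lt_neqAle neq_ab (le_trans ar).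
have -> : r = (r - a) / (b - a) * b + (1 - (r - a) / (b - a)) * a.
  by field; rewrite gt_eqF.
apply: Cconv => //; first by apply: divr_ge0; lra.
by rewrite ler_pdivrMr // mul1r; lra.
Qed.

Lemma closed_conv_hull_ubound A s t :
  ubound A s -> closed_conv_hull A t -> t <= s.
Proof.
move=> As /(_ [set x | x <= s]); apply; split; last by split; [exact: closed_le|].
by move=> a b u /= ? ? ? ?; nra.
Qed.

Lemma closed_conv_hull_lbound A s t :
  lbound A s -> closed_conv_hull A t -> s <= t.
Proof.
move=> As /(_ [set x | s <= x]); apply; split; last by split; [exact: closed_ge|].
by move=> a b u /= ? ? ? ?; nra.
Qed.

Lemma closed_conv_hull_between A r :
  (forall s, ubound A s -> r <= s) -> (forall s, lbound A s -> s <= r) ->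
  closed_conv_hull A r.
Proof.
move=> r_le r_ge C [Cconv [Ccl AC]]; apply: Ccl => B /nbhs_ballP[e /= e_gt0 eB].
have ballE x : `|r - x| < e -> B x by move=> ?; apply: eB; rewrite -ball_normE.
have [a Aa lt_a] : exists2 a, A a & r - e < a.
  apply: contrapT => noa; suff : r <= r - e by lra.
  by apply: r_le => a Aa; rewrite leNgt; apply: contra_notN noa => ?; exists a.
have [b Ab lt_b] : exists2 b, A b & b < r + e.
  apply: contrapT => nob; suff : r + e <= r by lra.
  by apply: r_ge => b Ab; rewrite leNgt; apply: contra_notN nob => ?; exists b.
have [le_ar|lt_ra] := lerP a r.
  by exists a; split; [exact: AC | apply: ballE; rewrite ger0_norm; lra].
have [le_rb|lt_br] := lerP r b.
  by exists b; split; [exact: AC | apply: ballE; rewrite ler0_norm; lra].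
exists r; split; last by apply: ballE; rewrite subrr normr0.
by apply: (convex_set_R_between Cconv (AC b Ab) (AC a Aa)); rewrite (ltW lt_br) (ltW lt_ra).
Qed.

Lemma closed_conv_hull_of_near_hulls A r :
  (forall d, 0 < d -> exists B t, [/\ closed_conv_hull B t, `|t - r| < d &
     forall b, B b -> exists2 a, A a & `|b - a| <= d]) ->
  closed_conv_hull A r.
Proof.
move=> near; apply: closed_conv_hull_between => s As; apply/ler_addgt0Pr => e e_gt0;
  have /near[B [t [Bt rt BA]]] : 0 < e / 2 by lra.
- suff : t <= s + e / 2 by move: rt; rewrite ltr_norml; lra.
  apply: closed_conv_hull_ubound Bt => b /BA[a /As le_as].
  by rewrite ler_norml; lra.
- suff : s - e / 2 <= t by move: rt; rewrite ltr_norml; lra.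
  apply: closed_conv_hull_lbound Bt => b /BA[a /As le_sa].
  by rewrite ler_norml; lra.
Qed.

End RealHulls.

Lemma normr_sub_normalize (R : numFieldType) (X : normedModType R) (y : X) :
  y != 0 -> `|y - `|y|^-1 *: y| = `| `|y| - 1|.
Proof.
move=> y_neq0; rewrite -{1}[y]scale1r -scalerBl normrZ.
rewrite -[k in _ * k](ger0_norm (normr_ge0 y)) -normrM mulrBl mul1r.
by rewrite mulVf ?normr_eq0 // distrC.
Qed.

Section NearlyUnitNorm.
Variables (R : realType) (X : normedModType R) (V : set X) (N : X -> R).
Hypotheses (linV : lin_subspace V) (normN : norm_on V N).

Lemma norm_on0 : N 0 = 0.
Proof.
case: linV => V0 _; case: normN => _ [_ [homN _]].
by have := homN 0 0 V0; rewrite scale0r normr0 mul0r.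
Qed.

Variable e : R.
Hypothesis N_near_unit : forall x, V x -> `|x| = 1 -> `|1 - N x| <= e.

Lemma norm_on_near z : V z -> `|N z - `|z| | <= e * `|z|.
Proof.
move=> Vz; have [->|z_neq0] := eqVneq z 0.
  by rewrite norm_on0 normr0 subrr normr0 mulr0.
case: linV => _ [_ scaleV]; case: normN => _ [_ [homN _]].
have z_gt0 : 0 < `|z| by rewrite normr_gt0.
set x := `|z|^-1 *: z.
have x_unit : `|x| = 1 by rewrite normrZ ger0_norm ?invr_ge0 ?ltW ?mulVf ?gt_eqF.
have -> : N z = `|z| * N x.
  by rewrite homN // ger0_norm ?invr_ge0 ?ltW // mulrA mulfV ?gt_eqF ?mul1r.
rewrite -{2}[`|z|]mulr1 -mulrBr normrM (ger0_norm (ltW z_gt0)) mulrC ler_pM2r //.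
rewrite distrC; apply: N_near_unit; [exact: scaleV | exact: x_unit].
Qed.

Hypotheses (e_ge0 : 0 <= e) (e_le_half : e <= 1 / 2).

Lemma sphere_on_norm_le2 z : sphere_on V N z -> `|z| <= 2.
Proof.
move=> [Vz Nz]; have := norm_on_near Vz; rewrite Nz ler_norml => /andP[z_le _].
have : e * `|z| <= 1 / 2 * `|z| by rewrite ler_wpM2r.
lra.
Qed.

Lemma sphere_on_norm z : sphere_on V N z -> `| `|z| - 1| <= 2 * e.
Proof.
move=> Sz; have := norm_on_near Sz.1; rewrite Sz.2 distrC => /le_trans; apply.
by rewrite [2 * e]mulrC ler_wpM2l // sphere_on_norm_le2.
Qed.

Lemma sphere_on_near_unit y :
  sphere_on V N y -> exists2 x : X, `|x| = 1 & `|y - x| <= 2 * e.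
Proof.
move=> Sy; have y_neq0 : y != 0.
  by apply/eqP => y0; case: Sy => _ /eqP; rewrite y0 norm_on0 eq_sym oner_eq0.
exists (`|y|^-1 *: y); last by rewrite normr_sub_normalize // sphere_on_norm.
by rewrite normrZ ger0_norm ?invr_ge0 // mulVf // normr_eq0.
Qed.

Lemma near_sphere_on u w (dd : R) : V u -> `|w| = 1 -> `|w - u| <= dd ->
  dd <= 1 / 2 -> exists2 v, sphere_on V N v & `|v - w| <= 3 * e + 3 * dd.
Proof.
move=> Vu w_unit wu_le dd_le; case: linV => _ [_ scaleV].
case: normN => _ [_ [homN _]].
have u_near : `| `|u| - 1| <= dd.
  by rewrite -w_unit distrC (le_trans (ler_dist_dist _ _)).
have Nu_near := norm_on_near Vu.
have /andP[u_ge u_le] : 1 / 2 <= `|u| <= 3 / 2.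
  by move: u_near; rewrite ler_norml => /andP[? ?]; apply/andP; split; lra.
have eu_le : e * `|u| <= 3 / 2 * e by rewrite mulrC ler_wpM2r.
have u_le_2Nu : `|u| <= 2 * N u.
  have : e * `|u| <= 1 / 2 * `|u| by rewrite ler_wpM2r.
  by move: Nu_near; rewrite ler_norml => /andP[? _]; lra.
have Nu_gt0 : 0 < N u by lra.
have one_Nu : `|1 - N u| <= dd + e * `|u|.
  apply: le_trans (ler_distD `|u| _ _) _.
  by rewrite (distrC 1) (distrC `|u|) lerD.
exists ((N u)^-1 *: u).
  split; first exact: scaleV.
  by rewrite homN // ger0_norm ?invr_ge0 ?(ltW Nu_gt0) // mulVf ?gt_eqF.
have vu_le : `|(N u)^-1 *: u - u| <= 3 * e + 2 * dd.
  have -> : (N u)^-1 *: u - u = ((1 - N u) / N u) *: u.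
    by rewrite mulrBl mul1r mulfV ?gt_eqF // scalerBl scale1r.
  rewrite normrZ normrM normfV (gtr0_norm Nu_gt0) mulrAC ler_pdivrMr //.
  apply: le_trans (_ : (dd + e * `|u|) * (2 * N u) <= _).
    by apply: ler_pM => //; apply: normr_ge0.
  by rewrite mulrA; apply: ler_wpM2r; [exact: ltW | lra].
apply: le_trans (ler_distD u _ _) _; rewrite (distrC u); lra.
Qed.

Lemma sphere_on_dist_near y v x w : sphere_on V N y -> sphere_on V N v ->
  `|N (y - v) - `|x - w| | <= 4 * e + `|y - x| + `|v - w|.
Proof.
move=> Sy Sv; have Vyv : V (y - v).
  case: linV => _ [addV scaleV]; rewrite -scaleN1r.
  by apply: addV; [exact: Sy.1 | apply: scaleV; exact: Sv.1].
have yv_le : `|y - v| <= 4.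
  apply: le_trans (ler_normB _ _) _.
  have := lerD (sphere_on_norm_le2 Sy) (sphere_on_norm_le2 Sv); lra.
have Nyv := norm_on_near Vyv.
have eyv_le : e * `|y - v| <= e * 4 := ler_wpM2l e_ge0 yv_le.
have yv_xw : `| `|y - v| - `|x - w| | <= `|y - x| + `|v - w|.
  apply: le_trans (ler_dist_dist _ _) _.
  have -> : y - v - (x - w) = (y - x) - (v - w).
    by rewrite !opprB addrACA [RHS]addrACA [- v + _]addrC.
  exact: ler_normB.
apply: le_trans (ler_distD `|y - v| _ _) _; lra.
Qed.

End NearlyUnitNorm.

Lemma ler_dist_mean (R : numFieldType) m (a b : 'I_m.+1 -> R) (D : R) :
  (forall j, `|a j - b j| <= D) ->
  `|m.+1%:R^-1 * \sum_j a j - m.+1%:R^-1 * \sum_j b j| <= D.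
Proof.
move=> abD; rewrite -mulrBr -sumrB normrM ger0_norm ?invr_ge0 //.
rewrite ler_pdivrMl ?ltr0Sn //.
apply: le_trans (ler_norm_sum _ _ _) _.
apply: le_trans (ler_sum _ (fun j _ => abD j)) _.
by rewrite sumr_const card_ord mulr_natl.
Qed.

Lemma eventually_near_subspaces (R : numFieldType) (X : normedModType R)
    (Xn : nat -> set X) :
  (forall n, Xn n `<=` Xn n.+1) -> closure (\bigcup_n Xn n) = setT ->
  forall k (w : 'I_k -> X) (dd : R), 0 < dd ->
  exists N, forall n, (N <= n)%N -> forall j, exists2 u, Xn n u & `|w j - u| < dd.
Proof.
move=> Xn_incr Xn_dense k w dd dd_gt0.
have near j : exists p : nat * X, Xn p.1 p.2 /\ `|w j - p.2| < dd.
  have : closure (\bigcup_n Xn n) (w j) by rewrite Xn_dense.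
  move=> /(_ (ball (w j) dd) (nbhsx_ballx _ _ dd_gt0)) [u [[n _ Xnu] wu]].
  by exists (n, u); split; last by move: wu; rewrite -ball_normE.
have [p pP] := boolp.choice near.
have Xn_mono := @homo_leq _ Xn (@subset X) (@subset_refl X)
  (fun _ _ _ AB BC => subset_trans AB BC) Xn_incr.
exists (\max_j (p j).1) => n le_n j; exists (p j).2; last exact: (pP j).2.
by apply: Xn_mono (pP j).1; apply: leq_trans le_n; apply: leq_bigmax.
Qed.

Section SphereMeans.
Variables (R : realType) (X : normedModType R).
Variables (Xn : nat -> set X) (Nn : nat -> X -> R).
Hypotheses (linXn : forall n, lin_subspace (Xn n))
  (Xn_incr : forall n, Xn n `<=` Xn n.+1)
  (Xn_dense : closure (\bigcup_n Xn n) = setT)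
  (normNn : forall n, norm_on (Xn n) (Nn n)).
Hypothesis Nn_near_unit : forall e : R, 0 < e -> exists N : nat,
  forall n, (N <= n)%N -> forall x, Xn n x -> `|x| = 1 -> `|1 - Nn n x| <= e.
Variables (m : nat) (w : 'I_m.+1 -> X).
Hypothesis w_unit : forall j, `|w j| = 1.

Lemma sphere_means_near d : 0 < d -> exists N, forall n, (N <= n)%N ->
  exists2 v : 'I_m.+1 -> X, (forall j, sphere_on (Xn n) (Nn n) (v j)) &
  forall y, sphere_on (Xn n) (Nn n) y -> exists2 x : X, `|x| = 1 &
    `|m.+1%:R^-1 * \sum_j Nn n (y - v j) - m.+1%:R^-1 * \sum_j `|x - w j| | <= d.
Proof.
(* Each term of the mean is off by at most 4e + 2e + 6e (sphere_on_dist_near). *)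
move=> d_gt0; pose e := Num.min (1 / 2) (d / 12).
have e_gt0 : 0 < e by rewrite lt_min; apply/andP; split; lra.
have /andP[e_le_half e_le_d] : (e <= 1 / 2) && (e <= d / 12) by rewrite -le_min.
have [N1 N1P] := Nn_near_unit e_gt0.
have [N2 N2P] := eventually_near_subspaces Xn_incr Xn_dense w e_gt0.
exists (maxn N1 N2) => n; rewrite geq_max => /andP[le_N1n le_N2n].
have near_unit := N1P n le_N1n.
have [linV normN] := (linXn n, normNn n).
have near_w j : exists v, sphere_on (Xn n) (Nn n) v /\ `|v - w j| <= 6 * e.
  have [u Xu wu] := N2P n le_N2n j.
  have [v Sv vw] := near_sphere_on linV normN near_unit (ltW e_gt0) e_le_half
    Xu (w_unit j) (ltW wu) e_le_half.
  by exists v; split; last lra.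
have [v vP] := boolp.choice near_w.
exists v => [j|y Sy]; first exact: (vP j).1.
have [x x_unit yx] := sphere_on_near_unit linV normN near_unit (ltW e_gt0) e_le_half Sy.
exists x => //; apply: ler_dist_mean => j; have [Sv vw] := vP j.
apply: le_trans (sphere_on_dist_near linV normN near_unit (ltW e_gt0) e_le_half _ _ Sy Sv) _.
lra.
Qed.

Variables (rho : nat -> R) (r : R).
Hypothesis rho_R_sub : forall n, R_sub (Xn n) (Nn n) (rho n).
Hypothesis r_cluster : forall e : R, 0 < e -> forall N : nat,
  exists2 n, (N <= n)%N & `|rho n - r| < e.

Lemma cluster_in_closed_conv_hull :
  closed_conv_hull [set m.+1%:R^-1 * \sum_j `|x - w j| | x in [set x : X | `|x| = 1]] r.
Proof.
apply: closed_conv_hull_of_near_hulls => d d_gt0.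
have [N NP] := sphere_means_near d_gt0.
have [n le_Nn rho_r] := r_cluster d_gt0 N.
have [v Sv v_near] := NP n le_Nn.
exists [set m.+1%:R^-1 * \sum_j Nn n (y - v j) | y in sphere_on (Xn n) (Nn n)].
exists (rho n); split => //; first exact: rho_R_sub n m I v Sv.
move=> _ [y Sy <-]; have [x x_unit xy] := v_near y Sy.
by exists (m.+1%:R^-1 * \sum_j `|x - w j|) => //; exists x.
Qed.

End SphereMeans.

Theorem theorem4p5 (R : realType) (X : normedModType R)
    (Xn : nat -> set X) (Nn : nat -> X -> R) (rho : nat -> R) (r : R) :
  (forall n, lin_subspace (Xn n)) ->
  (forall n, Xn n `<=` Xn n.+1) ->
  closure (\bigcup_n Xn n) = setT ->
  (forall n, norm_on (Xn n) (Nn n)) ->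
  (forall n, R_sub (Xn n) (Nn n) (rho n)) ->
  (forall e : R, 0 < e -> exists N : nat, forall n, (N <= n)%N ->
     forall x, Xn n x -> `|x| = 1 -> `|1 - Nn n x| <= e) ->
  (forall e : R, 0 < e -> forall N : nat, exists2 n, (N <= n)%N & `|rho n - r| < e) ->
  R_X X r.
Proof.
move=> linXn Xn_incr Xn_dense normNn rho_R_sub Nn_near_unit r_cluster m _ w w_unit.
exact: (cluster_in_closed_conv_hull linXn Xn_incr Xn_dense normNn Nn_near_unit
  w_unit rho_R_sub r_cluster).
Qed.
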